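(* Let a domain $v$ be a triple $(\mu^{(v)}, f^{(v)}, g^{(v)})$ with $\mu^{(v)}$ a distribution on $\mathbb{R}^d$, $f^{(v)}:\mathbb{R}^d\to\mathbb{R}^{d'}$ and $g^{(v)}:\mathbb{R}^{d'}\to\mathcal{Y}$, and $h^{(v)}=g^{(v)}\circ f^{(v)}$. Let $u$ be the unseen domain and $s=1,\dots,S$ the seen domains. For $h=g\circ f$ define $R^{(v)}(h):=\mathbb{E}_{\bm{x}\sim\mu^{(v)}}[\ell(h(\bm{x}),h^{(v)}(\bm{x}))]$. Assume (i) $\ell$ is non-negative, symmetric, bounded by a finite positive number $L$, and satisfies the triangle inequality; and (ii) $f$ is invertible when restricted to the data manifold (the support of the input distributions). Then for all convex weights $\lambda^{(1)},\dots,\lambda^{(S)}$ (nonnegative, summing to one) and any such hypothesis $h=g\circ f$, \[ R^{(u)}(h)\le\sum_{s=1}^S\lambda^{(s)}R^{(s)}(h)+L\sum_{s=1}^S\lambda^{(s)}\|f_{\#}\mu^{(u)}-f_{\#}\mu^{(s)}\|_1+\sum_{s=1}^S\lambda^{(s)}\sigma^{(u,s)}, \] where $f_{\#}\mu^{(v)}$ is the pushforward of $\mu^{(v)}$ under $f$, $\|\cdot\|_1$ is the $L^1$ distance between densities, and $\sigma^{(u,s)}:=\min\{\mathbb{E}_{\bm{x}\sim\mu^{(u)}}[\ell(h^{(u)}(\bm{x}),h^{(s)}(\bm{x}))],\ \mathbb{E}_{\bm{x}\sim\mu^{(s)}}[\ell(h^{(u)}(\bm{x}),h^{(s)}(\b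m{x}))]\}$.
   Context: Domain generalization with $S$ seen domains and one unseen domain. *)

From HB Require Import structures.
From mathcomp Require Import all_boot all_order all_algebra.
From mathcomp Require Import all_classical all_reals all_analysis.
Set Implicit Arguments.
Unset Strict Implicit.
Unset Printing Implicit Defensive.
Import Order.TTheory GRing.Theory Num.Theory.
Local Open Scope classical_set_scope.
Local Open Scope ring_scope.

(* Euclidean space R^n is modelled as [n.-tuple R], equipped by
   MathComp-Analysis with the product (coordinate-generated) sigma-algebra. *)

Section defs.
Local Open Scope ereal_scope.
Context {R : realType}.

Definition is_density d (Z : measurableType d)
  (nu : {measure set Z -> \bar R}) (P : set Z -> \bar R) (p : Z -> R) : Prop :=
  [/\ (forall z, (0 <= p z)%R), measurable_fun [set: Z] p &
      forall A, measurable A -> P A = \int[nu]_(z in A) (p z)%:E].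

Definition L1dist d (Z : measurableType d)
  (nu : {measure set Z -> \bar R}) (p q : Z -> R) : \bar R :=
  \int[nu]_z (`|p z - q z|)%:E.

(* E_{x ~ mu}[ ell (a x) (b x) ] ;  R^{(v)}(h) = expl mu^{(v)} ell h h^{(v)}. *)
Definition expl d (X : measurableType d) (Y : Type)
  (mu : {measure set X -> \bar R}) (ell : Y -> Y -> R) (a b : X -> Y) : \bar R :=
  \int[mu]_x (ell (a x) (b x))%:E.

End defs.

(* On the data manifold M the feature map f has a measurable left inverse, so
   the loss of h = g o f against any labelling c is a bounded function of the
   feature f x alone, namely phi (f x) with phi z := ell (g z) (c (finv z)).
   Its expectations under two domains are then integrals of phi against the
   densities of the pushed-forward feature distributions, and differ by at
   most L times their L^1 distance. Together with the triangle inequality for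
   the expected loss, routed through h^(s) under whichever domain realises
   sigma^(u,s), this bounds R^(u)(h) by each single seen domain; a convex
   combination of these bounds is the claim. *)

From HB Require Import structures.
From mathcomp Require Import all_boot all_order all_algebra.
From mathcomp Require Import all_classical all_reals all_analysis.
From mathcomp Require Import measurable_realfun.
Import Order.TTheory GRing.Theory Num.Theory.

Set Implicit Arguments.
Unset Strict Implicit.
Unset Printing Implicit Defensive.

Local Open Scope classical_set_scope.
Local Open Scope ring_scope.

Section integral_density.
Local Open Scope ereal_scope.
Context d (Z : measurableType d) (R : realType).
Variables (nu P : {measure set Z -> \bar R}) (p : Z -> R).
Hypothesis Pp : is_density nu P p.

Import HBNNSimple.

Let p_ge0 z : 0 <= (p z)%:E. Proof. by case: Pp => p0 _ _; rewrite lee_fin. Qed.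

Let mp : measurable_fun [set: Z] (fun z => (p z)%:E).
Proof. by case: Pp => _ mp _; exact/measurable_EFinP. Qed.

Lemma integral_density_nnsfun (h : {nnsfun Z >-> R}) :
  \int[P]_z (h z)%:E = \int[nu]_z ((h z)%:E * (p z)%:E).
Proof.
have [_ _ P_int] := Pp.
rewrite integralT_nnsfun sintegralE.
under [RHS]eq_integral => z _.
  rewrite fimfunE -fsumEFin // ge0_mule_fsuml => [|r]; last exact: nnfun_muleindic_ge0.
  over.
rewrite ge0_integral_fsum //; last 2 first.
- move=> r; apply: emeasurable_funM mp.
  exact/measurable_EFinP/measurable_funM/measurable_indic.
- by move=> r z _; rewrite mule_ge0 // nnfun_muleindic_ge0.
apply: eq_fsbigr => r /[!inE] -[z _ <-].
under eq_integral do rewrite EFinM -muleA.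
rewrite ge0_integralZl //; last 3 first.
- by apply: emeasurable_funM mp; exact/measurable_EFinP/measurable_indic.
- by move=> x _; rewrite mule_ge0 // lee_fin indicE; case: (_ \in _).
- by rewrite lee_fin.
rewrite P_int // integral_mkcond; congr (_ * _); apply: eq_integral => x _.
by rewrite muleC epatch_indic.
Qed.

Lemma integral_density (phi : Z -> \bar R) : (forall z, 0 <= phi z) ->
  measurable_fun [set: Z] phi ->
  \int[P]_z phi z = \int[nu]_z (phi z * (p z)%:E).
Proof.
move=> phi0 mphi.
pose h := nnsfun_approx measurableT mphi.
have h_phi z : EFin \o h^~ z @ \oo --> phi z by exact: cvg_nnsfun_approx.
have nd_h z : nondecreasing_seq (h^~ z) by move=> m n mn; exact/lefP/nd_nnsfun_approx.
rewrite (@nd_ge0_integral_lim _ _ _ P phi h phi0 nd_h h_phi).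
have hp_phip z : (fun n => (h n z)%:E * (p z)%:E) @ \oo --> phi z * (p z)%:E.
  by apply: cvgeZr => //; exact: h_phi.
under [RHS]eq_integral => z _ do rewrite -(cvg_lim _ (hp_phip z)) //.
rewrite (@monotone_convergence _ _ _ nu _ measurableT (fun n z => (h n z)%:E * (p z)%:E)).
- apply: congr_lim; apply/funext => n /=.
  by rewrite -integralT_nnsfun integral_density_nnsfun.
- by move=> n; apply: emeasurable_funM => //; exact/measurable_EFinP.
- by move=> n z _; rewrite mule_ge0 // lee_fin; exact: fun_ge0.
- by move=> z _ m n mn; rewrite lee_wpmul2r // lee_fin; exact: nd_h.
Qed.

End integral_density.

Section integral_L1dist.
Local Open Scope ereal_scope.
Context d (Z : measurableType d) (R : realType).
Variables (nu P Q : {measure set Z -> \bar R}) (p q : Z -> R).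
Hypotheses (Pp : is_density nu P p) (Qq : is_density nu Q q).

Lemma integral_le_L1dist (L : R) (phi : Z -> R) :
  measurable_fun [set: Z] phi -> (forall z, 0 <= phi z <= L)%R ->
  \int[P]_z (phi z)%:E <= \int[Q]_z (phi z)%:E + L%:E * L1dist nu p q.
Proof.
move=> mphi phiL.
have phi0 z : (0 <= phi z)%R by case/andP: (phiL z).
have L0 : (0 <= L)%R by case/andP: (phiL point) => /le_trans; apply.
have [p0 mp _] := Pp; have [q0 mq _] := Qq.
have mphiE : measurable_fun [set: Z] (fun z => (phi z)%:E) by exact/measurable_EFinP.
have mphiM (r : Z -> R) : measurable_fun [set: Z] r ->
    measurable_fun [set: Z] (fun z => (phi z)%:E * (r z)%:E).
  by move=> mr; apply: emeasurable_funM mphiE _; exact/measurable_EFinP.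
have mpq : measurable_fun [set: Z] (fun z => (`|p z - q z|)%:E).
  by apply/measurable_EFinP; exact: measurableT_comp (measurable_funB mp mq).
rewrite (integral_density Pp) // (integral_density Qq) //.
apply: (@le_trans _ _ (\int[nu]_z ((phi z)%:E * (q z)%:E + L%:E * (`|p z - q z|)%:E))).
  apply: ge0_le_integral => //.
  - by move=> z _; rewrite mule_ge0 ?lee_fin.
  - exact: mphiM.
  - by apply: emeasurable_funD; [exact: mphiM | exact: emeasurable_funM].
  move=> z _; rewrite -!EFinM -EFinD lee_fin.
  apply: (@le_trans _ _ (phi z * q z + phi z * `|p z - q z|)%R).
    by rewrite -mulrDr ler_wpM2l // -lerBlDl ler_norm.
  by rewrite lerD2l ler_wpM2r //; case/andP: (phiL z).
rewrite ge0_integralD //; last 4 first.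
- by move=> z _; rewrite mule_ge0 ?lee_fin.
- exact: mphiM.
- by move=> z _; rewrite mule_ge0 ?lee_fin.
- exact: emeasurable_funM.
by rewrite ge0_integralZl // => z _; rewrite lee_fin.
Qed.

End integral_L1dist.

Section expected_loss.
Local Open Scope ereal_scope.
Context d (X : measurableType d) dY (Y : measurableType dY) (R : realType).
Variable ell : Y -> Y -> R.
Hypothesis ell_ge0 : forall y y', (0 <= ell y y')%R.
Hypothesis mell : measurable_fun [set: Y * Y] (fun yy : Y * Y => ell yy.1 yy.2).

Lemma measurable_loss (a b : X -> Y) :
  measurable_fun [set: X] a -> measurable_fun [set: X] b ->
  measurable_fun [set: X] (fun x => (ell (a x) (b x))%:E).
Proof.
move=> ma mb; apply/measurable_EFinP.
exact: measurableT_comp mell (measurable_fun_pair ma mb).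
Qed.

Lemma expl_ge0 (mu : {measure set X -> \bar R}) (a b : X -> Y) :
  0 <= expl mu ell a b.
Proof. by apply: integral_ge0 => x _; rewrite lee_fin. Qed.

Lemma explC (ellC : forall y y', ell y y' = ell y' y)
    (mu : {measure set X -> \bar R}) (a b : X -> Y) :
  expl mu ell a b = expl mu ell b a.
Proof. by apply: eq_integral => x _; rewrite ellC. Qed.

Lemma expl_triangle
    (ell_triangle : forall y1 y2 y3, (ell y1 y3 <= ell y1 y2 + ell y2 y3)%R)
    (mu : {measure set X -> \bar R}) (a b c : X -> Y) :
  measurable_fun [set: X] a -> measurable_fun [set: X] b ->
  measurable_fun [set: X] c ->
  expl mu ell a c <= expl mu ell a b + expl mu ell b c.
Proof.
move=> ma mb mc; rewrite /expl -ge0_integralD //; last 4 first.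
- by move=> x _; rewrite lee_fin.
- exact: measurable_loss.
- by move=> x _; rewrite lee_fin.
- exact: measurable_loss.
apply: ge0_le_integral => //.
- by move=> x _; rewrite lee_fin.
- exact: measurable_loss.
- by apply: emeasurable_funD; exact: measurable_loss.
- by move=> x _; rewrite -EFinD lee_fin.
Qed.

End expected_loss.

Section domain_shift.
Local Open Scope ereal_scope.
Context dX dZ dY (X : measurableType dX) (Z : measurableType dZ)
  (Y : measurableType dY) (R : realType).
Variables (ell : Y -> Y -> R) (L : R).
Hypothesis ell_ge0 : forall y y', (0 <= ell y y')%R.
Hypothesis ell_le : forall y y', (ell y y' <= L)%R.
Hypothesis mell : measurable_fun [set: Y * Y] (fun yy : Y * Y => ell yy.1 yy.2).
Variables (nu : {measure set Z -> \bar R}) (M : set X) (f : X -> Z) (finv : Z -> X).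
Hypotheses (mM : measurable M) (mf : measurable_fun [set: X] f).
Hypothesis mfinv : measurable_fun [set: Z] finv.
Hypothesis finvK : forall x, M x -> finv (f x) = x.

Lemma expl_comp_le_L1dist (mua mub : {measure set X -> \bar R}) (pa pb : Z -> R)
    (g : Z -> Y) (c : X -> Y) :
  mua (~` M) = 0 -> mub (~` M) = 0 ->
  is_density nu (pushforward mua f) pa -> is_density nu (pushforward mub f) pb ->
  measurable_fun [set: Z] g -> measurable_fun [set: X] c ->
  expl mua ell (g \o f) c <= expl mub ell (g \o f) c + L%:E * L1dist nu pa pb.
Proof.
move=> Ma Mb fpa fpb mg mc.
pose phi z := ell (g z) (c (finv z)).
have mphi : measurable_fun [set: Z] phi.
  exact: measurableT_comp mell (measurable_fun_pair mg (measurableT_comp mc mfinv)).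
have mphiE : measurable_fun [set: Z] (fun z => (phi z)%:E) by exact/measurable_EFinP.
have explE (mu : {measure set X -> \bar R}) : mu (~` M) = 0 ->
    expl mu ell (g \o f) c = \int[pushforward mu f]_z (phi z)%:E.
  have phi_ge0 : {in [set: Z], forall z, 0 <= (phi z)%:E}
    by move=> z _; rewrite lee_fin ell_ge0.
  move=> M0; rewrite (ge0_integral_pushforward mf mu measurableT mphiE phi_ge0).
  rewrite preimage_setT; apply: ae_eq_integral => //.
  - exact: measurable_loss (measurableT_comp mg mf) mc.
  - exact: measurableT_comp mphiE mf.
  exists (~` M); split => [|//|x /= notphi]; first exact: measurableC.
  by move=> Mx; apply: notphi => _; rewrite /phi finvK.
rewrite (explE _ Ma) (explE _ Mb).
apply: (@integral_le_L1dist _ _ _ nu _ _ pa pb fpa fpb L phi mphi) => // z.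
by rewrite /phi ell_ge0 ell_le.
Qed.

Hypothesis ellC : forall y y', ell y y' = ell y' y.
Hypothesis ell_triangle : forall y1 y2 y3, (ell y1 y3 <= ell y1 y2 + ell y2 y3)%R.

Lemma expl_le_seen_domain (mu_u mu_s : {measure set X -> \bar R}) (p_u p_s : Z -> R)
    (g : Z -> Y) (h_u h_s : X -> Y) :
  mu_u (~` M) = 0 -> mu_s (~` M) = 0 ->
  is_density nu (pushforward mu_u f) p_u -> is_density nu (pushforward mu_s f) p_s ->
  measurable_fun [set: Z] g -> measurable_fun [set: X] h_u ->
  measurable_fun [set: X] h_s ->
  expl mu_u ell (g \o f) h_u <=
    expl mu_s ell (g \o f) h_s + L%:E * L1dist nu p_u p_s
    + Order.min (expl mu_u ell h_u h_s) (expl mu_s ell h_u h_s).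
Proof.
move=> Mu Ms fpu fps mg mhu mhs.
have mh : measurable_fun [set: X] (g \o f) by exact: measurableT_comp.
have shift := expl_comp_le_L1dist Mu Ms fpu fps mg.
case: (leP (expl mu_u ell h_u h_s) (expl mu_s ell h_u h_s)) => _.
- apply: le_trans (expl_triangle ell_ge0 mell ell_triangle mu_u mh mhs mhu) _.
  by rewrite (explC ellC mu_u h_s); apply: leeD => //; exact: shift.
- apply: le_trans (shift _ mhu) _; rewrite [X in _ <= X]addeAC; apply: leeD => //.
  by rewrite (explC ellC mu_s h_u); exact: expl_triangle.
Qed.

End domain_shift.

Lemma lee_convex_sum (R : realType) (S : nat) (lam : 'I_S -> R) (a : \bar R)
    (F : 'I_S -> \bar R) :
  (forall s, 0 <= lam s) -> \sum_(s < S) lam s = 1 -> (forall s, (a <= F s)%E) ->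
  (a <= \sum_(s < S) (lam s)%:E * F s)%E.
Proof.
move=> lam_ge0 lam_sum1 aF.
have -> : a = (\sum_(s < S) (lam s)%:E * a)%E.
  by rewrite -ge0_sume_distrl ?sumEFin ?lam_sum1 ?mul1e // => s _; rewrite lee_fin.
by apply: lee_sum => s _; apply: lee_wpmul2l; rewrite ?lee_fin.
Qed.

Theorem lemma2 (R : realType) (dX dZ : nat) (dY : measure_display)
  (Y : measurableType dY) (ell : Y -> Y -> R) (L : R) (S : nat)
  (mu_u : probability (dX.-tuple R) R)
  (mu : 'I_S -> probability (dX.-tuple R) R)
  (f_u : dX.-tuple R -> dZ.-tuple R) (g_u : dZ.-tuple R -> Y)
  (fs : 'I_S -> dX.-tuple R -> dZ.-tuple R) (gs : 'I_S -> dZ.-tuple R -> Y)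
  (f : dX.-tuple R -> dZ.-tuple R) (g : dZ.-tuple R -> Y)
  (nu : {measure set (dZ.-tuple R) -> \bar R})
  (p_u : dZ.-tuple R -> R) (p : 'I_S -> dZ.-tuple R -> R)
  (lam : 'I_S -> R) :
  (* (i) the loss *)
  0 < L ->
  (forall y y', 0 <= ell y y') ->
  (forall y y', ell y y' = ell y' y) ->
  (forall y y', ell y y' <= L) ->
  (forall y1 y2 y3, ell y1 y3 <= ell y1 y2 + ell y2 y3) ->
  measurable_fun [set: Y * Y] (fun yy : Y * Y => ell yy.1 yy.2) ->
  (* measurability of all feature maps and classifiers *)
  measurable_fun [set: dX.-tuple R] f_u -> measurable_fun [set: dZ.-tuple R] g_u ->
  (forall s, measurable_fun [set: dX.-tuple R] (fs s)) ->
  (forall s, measurable_fun [set: dZ.-tuple R] (gs s)) ->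
  measurable_fun [set: dX.-tuple R] f -> measurable_fun [set: dZ.-tuple R] g ->
  (* (ii) f is invertible on the data manifold M (full measure for all domains) *)
  (exists M : set (dX.-tuple R),
     [/\ measurable M, mu_u (~` M) = 0%E, (forall s, mu s (~` M) = 0%E) &
         exists finv : dZ.-tuple R -> dX.-tuple R,
           measurable_fun [set: dZ.-tuple R] finv /\
           forall x, M x -> finv (f x) = x]) ->
  (* densities of the pushforwards f_# mu^{(v)} w.r.t. the reference measure nu *)
  is_density nu (pushforward mu_u f) p_u ->
  (forall s, is_density nu (pushforward (mu s) f) (p s)) ->
  (* convex weights *)
  (forall s, 0 <= lam s) -> \sum_(s < S) lam s = 1 ->
  (expl mu_u ell (g \o f) (g_u \o f_u) <=
     \sum_(s < S) (lam s)%:E * expl (mu s) ell (g \o f) (gs s \o fs s)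
   + L%:E * \sum_(s < S) (lam s)%:E * L1dist nu p_u (p s)
   + \sum_(s < S) (lam s)%:E *
       Order.min (expl mu_u ell (g_u \o f_u) (gs s \o fs s))
                 (expl (mu s) ell (g_u \o f_u) (gs s \o fs s)))%E.
Proof.
move=> L_gt0 ell_ge0 ellC ell_le ell_triangle mell mf_u mg_u mfs mgs mf mg
  [M [mM Mu Ms [finv [mfinv finvK]]]] fpu fps lam_ge0 lam_sum1.
have bound s := expl_le_seen_domain ell_ge0 ell_le mell mM mf mfinv finvK ellC
  ell_triangle Mu (Ms s) fpu (fps s) mg (measurableT_comp mg_u mf_u)
  (measurableT_comp (mgs s) (mfs s)).
apply: le_trans (lee_convex_sum lam_ge0 lam_sum1 bound) _.
have L1_ge0 s : (0 <= L1dist nu p_u (p s))%E.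
  by apply: integral_ge0 => z _; rewrite lee_fin.
rewrite ge0_sume_distrr => [|s _]; last by rewrite mule_ge0 ?lee_fin.
rewrite -!big_split /=; apply: lee_sum => s _.
have shift_ge0 : (0 <= L%:E * L1dist nu p_u (p s))%E.
  by rewrite mule_ge0 ?lee_fin ?(ltW L_gt0).
have risk_ge0 : (0 <= expl (mu s) ell (g \o f) (gs s \o fs s))%E.
  exact: expl_ge0.
have sigma_ge0 : (0 <= Order.min (expl mu_u ell (g_u \o f_u) (gs s \o fs s))
                              (expl (mu s) ell (g_u \o f_u) (gs s \o fs s)))%E.
  by rewrite le_min !(expl_ge0 ell_ge0).
have risk_shift_ge0 := adde_ge0 risk_ge0 shift_ge0.
by rewrite (muleCA L%:E) -!ge0_muleDr.
Qed.
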